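(* For every sufficiently large positive integer $C$ the following holds. Let $l_n=(n+C)^3$ for $n\in\{0,1,2,\dots\}$, and let $G=(V,E)$ be the comb graph with vertex set $V=\{(n,l)\in\mathbb{N}_0\times\mathbb{N}_0:\ l\le l_n\}$ and edges $(n,0)\sim(n+1,0)$ and $(n,l)\sim(n,l+1)$ (for all admissible $n,l$). Let $f(n,0)=1/l_n$ and $f(n,l)=0$ for $0<l<l_n$. Define $v:V\to\mathbb{R}$ by $v(0,0)=l_0\sum_{k=0}^\infty \frac1{l_k}$, $v(n,0)=v(n-1,0)+\sum_{k=n}^\infty\frac1{l_k}$ for $n\ge1$, and $v(n,l)=\frac{l_n-l}{l_n}v(n,0)$. Then $v$ is a bounded solution of \[ \begin{cases}\Delta_\infty v(n,l)=-f(n,l), & l<l_n,\\ v(n,l)=0, & l=l_n.\end{cases} \]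
   Context: $\mathbb{N}_0=\{0,1,2,\dots\}$. The discrete infinity Laplacian of $w:V\to\mathbb{R}$ is $\Delta_\infty w(x)=\inf_{y\sim x}w(y)+\sup_{y\sim x}w(y)-2w(x)$, where $y\sim x$ means $\{x,y\}\in E$. *)

From HB Require Import structures.
From mathcomp Require Import all_boot all_order all_algebra.
From mathcomp Require Import all_classical all_reals all_analysis.
Unset Printing Implicit Defensive.
Import Order.TTheory GRing.Theory Num.Theory.
Local Open Scope classical_set_scope.
Local Open Scope ring_scope.

Definition lcomb (C n : nat) : nat := ((n + C) ^ 3)%N.

Definition inV (C : nat) (x : nat * nat) : Prop := (x.2 <= lcomb C x.1)%N.

Definition comb_adj (C : nat) (x y : nat * nat) : Prop :=
  inV C x /\ inV C y /\
  ((x.2 = 0%N /\ y.2 = 0%N /\ (y.1 = x.1.+1 \/ x.1 = y.1.+1)) \/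
   (x.1 = y.1 /\ (y.2 = x.2.+1 \/ x.2 = y.2.+1))).

Definition inf_laplacian (R : realType) (C : nat) (w : nat * nat -> R)
  (x : nat * nat) : R :=
  inf [set w y | y in [set y | comb_adj C x y]]
  + sup [set w y | y in [set y | comb_adj C x y]] - 2 * w x.

Definition fcomb (R : realType) (C : nat) (x : nat * nat) : R :=
  if x.2 == 0%N then 1 / (lcomb C x.1)%:R else 0.

Definition tailS (R : realType) (C n : nat) : R :=
  limn (fun N : nat => \sum_(n <= k < N) (1 / (lcomb C k)%:R : R)).

Fixpoint vbase (R : realType) (C n : nat) : R :=
  match n with
  | 0%N => (lcomb C 0)%:R * tailS R C 0
  | m.+1 => vbase R C m + tailS R C m.+1
  end.

Definition vcomb (R : realType) (C : nat) (x : nat * nat) : R :=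
  (((lcomb C x.1)%:R - (x.2)%:R) / (lcomb C x.1)%:R) * vbase R C x.1.

From HB Require Import structures.
From mathcomp Require Import all_boot all_order all_algebra.
From mathcomp Require Import all_classical all_reals all_analysis.
From mathcomp Require Import ring lra zify.
Import Order.TTheory GRing.Theory Num.Theory.
Local Open Scope ring_scope.

(* Write t_n = sum_(k >= n) 1/l_k.  Along a tooth v is affine in l, so its
   infinity Laplacian vanishes there.  At a root (n,0) the neighbours carry
   v(n,0) - t_n, v(n,0) + t_(n+1) and v(n,0) (1 - 1/l_n); as long as
   v(n,0) <= l_n t_n the first two are the minimum and the maximum, so the
   Laplacian is t_(n+1) - t_n = -1/l_n.  (At n = 0 the choice v(0,0) = l_0 t_0
   makes (0,1) play the role of the missing neighbour (n-1,0).)  The invariant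
   v(n,0) <= l_n t_n propagates because (l_(n+1) - l_n - 1) t_(n+1) >= 1,
   roughly 3 x^2 times 1/(2 x^2) for x = n + C.  Both estimates of t come from
   squeezing 1/x^3 between telescoping differences; the upper one,
   t_n <= 1/((x-1) x), also bounds v(n,0) by v(0,0) + 1. *)

Lemma telescope_sumrN (V : zmodType) n m (f : nat -> V) : (n <= m)%N ->
  \sum_(n <= k < m) (f k - f k.+1) = f n - f m.
Proof.
move=> nm; rewrite -opprB -telescope_sumr // -sumrN.
by apply: eq_bigr => k _; rewrite opprB.
Qed.

Section AttainedBounds.
Variable R : realType.
Implicit Type E : set R.

Lemma sup_max E x : E x -> ubound E x -> sup E = x.
Proof.
move=> Ex ubx; apply/eqP; rewrite eq_le ge_sup //=; last by exists x.
by apply: sup_upper_bound => //; split; exists x.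
Qed.

Lemma inf_min E x : E x -> lbound E x -> inf E = x.
Proof.
move=> Ex lbx; apply/eqP; rewrite eq_le lb_le_inf ?andbT //; last by exists x.
by apply: ge_inf => //; exists x.
Qed.

End AttainedBounds.

Section SeriesTail.
Local Open Scope classical_set_scope.
Context {R : realType} {u h : nat -> R}.
Hypotheses (u_ge0 : forall k, 0 <= u k) (h_ge0 : forall k, 0 <= h k).
Hypothesis u_le_telescope : forall k, u k <= h k - h k.+1.

Lemma partial_sum_le n N : \sum_(n <= k < N) u k <= h n.
Proof.
have [nN|Nn] := leqP n N; last by rewrite big_geq // ltnW.
apply: (le_trans (ler_sum _ (fun k _ => u_le_telescope k))).
by rewrite telescope_sumrN // gerBl.
Qed.

Lemma partial_sum_nondecreasing n :
  nondecreasing_seq (fun N => \sum_(n <= k < N) u k).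
Proof.
move=> N M NM /=; have [nN|Nn] := leqP n N.
  by rewrite (big_cat_nat nN NM) /= lerDl sumr_ge0.
by rewrite [X in X <= _]big_geq ?(ltnW Nn) // sumr_ge0.
Qed.

Lemma partial_sum_cvg n : cvgn (fun N => \sum_(n <= k < N) u k).
Proof.
apply: nondecreasing_is_cvgn; first exact: partial_sum_nondecreasing.
by exists (h n) => _ [N _ <-]; exact: partial_sum_le.
Qed.

Lemma partial_sum_le_tail n N :
  \sum_(n <= k < N) u k <= \big[+%R/0]_(n <= k <oo) u k.
Proof.
apply: nondecreasing_cvgn_le; [exact: partial_sum_nondecreasing | exact: partial_sum_cvg].
Qed.

Lemma tail_le n : \big[+%R/0]_(n <= k <oo) u k <= h n.
Proof.
by apply: limr_le; [exact: partial_sum_cvg | apply: nearW; exact: partial_sum_le].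
Qed.

Lemma tail_ge0 n : 0 <= \big[+%R/0]_(n <= k <oo) u k.
Proof. by apply: le_trans (partial_sum_le_tail n 0); rewrite big_geq. Qed.

Lemma tail_recl n :
  \big[+%R/0]_(n <= k <oo) u k = u n + \big[+%R/0]_(n.+1 <= k <oo) u k.
Proof.
have shifted : (fun N => u n + \sum_(n.+1 <= k < N) u k) @ \oo -->
    u n + \big[+%R/0]_(n.+1 <= k <oo) u k.
  exact: cvgD (cvg_cst _) (partial_sum_cvg n.+1).
apply: cvg_lim => //; apply: cvg_trans shifted; apply: near_eq_cvg.
near=> N; rewrite [RHS]big_ltn //.
by near: N; exact: nbhs_infty_gt.
Unshelve. all: by end_near.
Qed.

End SeriesTail.

Section CubeInequalities.
Context {R : realFieldType}.
Implicit Type x : R.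

Lemma inv_cube_le_telescope x : 2 <= x ->
  1 / x ^+ 3 <= 1 / ((x - 1) * x) - 1 / (x * (x + 1)).
Proof.
move=> x_ge2; have [x_neq0 x1_neq0 x2_neq0] : [/\ x != 0, x - 1 != 0 & x + 1 != 0].
  by split; apply/eqP; lra.
rewrite -subr_ge0.
have -> : 1 / ((x - 1) * x) - 1 / (x * (x + 1)) - 1 / x ^+ 3 =
    (x ^+ 2 + 1) / ((x - 1) * x ^+ 3 * (x + 1)) by field; rewrite ?x_neq0 ?x1_neq0 ?x2_neq0.
apply: divr_ge0; first nra.
by rewrite !mulr_ge0 ?exprn_ge0 //; lra.
Qed.

Lemma telescope_le_inv_cube x : 1 <= x ->
  1 / (2 * x * (x + 1)) - 1 / (2 * (x + 1) * (x + 1 + 1)) <= 1 / x ^+ 3.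
Proof.
move=> x_ge1; have [x_neq0 x1_neq0 x2_neq0] : [/\ x != 0, x + 1 != 0 & x + 1 + 1 != 0].
  by split; apply/eqP; lra.
rewrite -subr_ge0.
have -> : 1 / x ^+ 3 - (1 / (2 * x * (x + 1)) - 1 / (2 * (x + 1) * (x + 1 + 1))) =
    (3 * x + 2) / (x ^+ 3 * (x + 1) * (x + 1 + 1)) by field; rewrite ?x_neq0 ?x1_neq0 ?x2_neq0.
apply: divr_ge0; first lra.
by rewrite !mulr_ge0 ?exprn_ge0 //; lra.
Qed.

Lemma cube_gap_mul_telescope_ge1 x : 8 <= x ->
  1 <= (x ^+ 3 - (x - 1) ^+ 3 - 1) *
       (1 / (2 * x * (x + 1)) - 1 / (2 * (3 * x) * (3 * x + 1))).
Proof.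
move=> x_ge8; have [x_neq0 x1_neq0 x3_neq0] : [/\ x != 0, x + 1 != 0 & 3 * x + 1 != 0].
  by split; apply/eqP; lra.
rewrite -subr_ge0.
have -> : (x ^+ 3 - (x - 1) ^+ 3 - 1) *
    (1 / (2 * x * (x + 1)) - 1 / (2 * (3 * x) * (3 * x + 1))) - 1 =
  (x ^+ 2 - 7 * x - 2) / ((x + 1) * (3 * x + 1)) by field; rewrite ?x_neq0 ?x1_neq0 ?x3_neq0.
by apply: divr_ge0; [nra | apply: mulr_ge0; lra].
Qed.

End CubeInequalities.

Lemma inf_laplacian_minmax {R : realType} {C} {w : nat * nat -> R} {x ylo yhi} :
  comb_adj C x ylo -> comb_adj C x yhi ->
  (forall y, comb_adj C x y -> w ylo <= w y <= w yhi) ->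
  inf_laplacian R C w x = w ylo + w yhi - 2 * w x.
Proof.
move=> adj_lo adj_hi bounds; rewrite /inf_laplacian (@inf_min _ _ (w ylo)).
- by rewrite (@sup_max _ _ (w yhi)) //; [exists yhi | move=> _ [y /bounds /andP[_ hi] <-]].
- by exists ylo.
- by move=> _ [y /bounds /andP[lo _] <-].
Qed.

Lemma comb_adj_tooth C n l y : comb_adj C (n, l.+1) y -> y = (n, l) \/ y = (n, l.+2).
Proof. by case: y => p q; rewrite /comb_adj /= !pair_equal_spec; lia. Qed.

Lemma comb_adj_root0 C y : comb_adj C (0, 0)%N y -> y = (1, 0)%N \/ y = (0, 1)%N.
Proof. by case: y => p q; rewrite /comb_adj /= !pair_equal_spec; lia. Qed.

Lemma comb_adj_rootS C n y :
  comb_adj C (n.+1, 0)%N y -> y = (n, 0)%N \/ y = (n.+2, 0)%N \/ y = (n.+1, 1)%N.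
Proof. by case: y => p q; rewrite /comb_adj /= !pair_equal_spec; lia. Qed.

Section CombSolution.
Variables (R : realType) (C : nat).
Hypothesis C_ge2 : (2 <= C)%N.

Lemma natr_addSn k : ((k.+1 + C)%:R : R) = (k + C)%:R + 1.
Proof. by rewrite addSn -addn1 natrD. Qed.

Lemma lcombE k : (lcomb C k)%:R = ((k + C)%:R : R) ^+ 3.
Proof. by rewrite /lcomb natrX. Qed.

Lemma lcomb_gt0 k : (0 < lcomb C k)%N.
Proof. by rewrite expn_gt0 addn_gt0 (ltnW C_ge2) orbT. Qed.

Lemma natr_lcomb_gt0 k : 0 < ((lcomb C k)%:R : R).
Proof. by rewrite ltr0n lcomb_gt0. Qed.

Let inv_lcomb_ge0 k : 0 <= 1 / ((lcomb C k)%:R : R).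
Proof. by rewrite divr_ge0 // ltW // natr_lcomb_gt0. Qed.

Let majorant k : R := 1 / (((k + C)%:R - 1) * (k + C)%:R).

Let majorant_ge0 k : 0 <= majorant k.
Proof.
have : (2 : R) <= (k + C)%:R by rewrite ler_nat; lia.
by move=> x_ge2; rewrite /majorant divr_ge0 // mulr_ge0 //; lra.
Qed.

Let inv_lcomb_le_majorant k : 1 / (lcomb C k)%:R <= majorant k - majorant k.+1.
Proof.
rewrite /majorant lcombE natr_addSn addrK; apply: inv_cube_le_telescope.
by rewrite ler_nat; lia.
Qed.

Lemma tailS_le n : tailS R C n <= 1 / (((n + C)%:R - 1) * (n + C)%:R).
Proof. exact: tail_le inv_lcomb_ge0 majorant_ge0 inv_lcomb_le_majorant n. Qed.

Lemma tailS_ge0 n : 0 <= tailS R C n.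
Proof. exact: tail_ge0 inv_lcomb_ge0 majorant_ge0 inv_lcomb_le_majorant n. Qed.

Lemma tailS_recl n : tailS R C n = 1 / (lcomb C n)%:R + tailS R C n.+1.
Proof. exact: tail_recl inv_lcomb_ge0 majorant_ge0 inv_lcomb_le_majorant n. Qed.

Lemma tailS_ge n N : (n <= N)%N ->
  1 / (2 * (n + C)%:R * ((n + C)%:R + 1)) - 1 / (2 * (N + C)%:R * ((N + C)%:R + 1))
    <= tailS R C n.
Proof.
move=> nN; apply: le_trans _
  (partial_sum_le_tail inv_lcomb_ge0 majorant_ge0 inv_lcomb_le_majorant n N).
set minorant := fun k => 1 / (2 * (k + C)%:R * ((k + C)%:R + 1)) : R.
rewrite -[X in X <= _]/(minorant n - minorant N) -telescope_sumrN //.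
apply: ler_sum => k _; rewrite /minorant lcombE natr_addSn.
by apply: telescope_le_inv_cube; rewrite ler1n; lia.
Qed.

Lemma tailS_cube_gap_ge1 n : (7 <= C)%N ->
  1 <= ((lcomb C n.+1)%:R - (lcomb C n)%:R - 1) * tailS R C n.+1.
Proof.
move=> C_ge7; set x : R := (n.+1 + C)%:R.
have x_ge8 : 8 <= x by rewrite /x ler_nat; lia.
(* Truncating at [k + C = 3 x] keeps 8/9 of the leading term 1/(2 x^2) of the
   tail, enough against the gap l_(n+1) - l_n ~ 3 x^2. *)
have tail_ge : 1 / (2 * x * (x + 1)) - 1 / (2 * (3 * x) * (3 * x + 1)) <= tailS R C n.+1.
  have -> : 3 * x = (3 * n.+1 + 2 * C + C)%:R by rewrite /x -natrM; congr _%:R; lia.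
  by apply: tailS_ge; lia.
apply: le_trans (cube_gap_mul_telescope_ge1 _ x_ge8) _.
rewrite !lcombE -/x (_ : (n + C)%:R = x - 1); last by rewrite /x natr_addSn addrK.
apply: ler_wpM2l => //.
have -> : x ^+ 3 - (x - 1) ^+ 3 - 1 = 3 * x * (x - 1) by ring.
nra.
Qed.

Lemma vbase_ge0 n : 0 <= vbase R C n.
Proof.
elim: n => [|n IHn] /=; first by rewrite mulr_ge0 ?tailS_ge0.
by rewrite addr_ge0 ?tailS_ge0.
Qed.

Lemma vbase_le_lcomb_tailS n : (7 <= C)%N -> vbase R C n <= (lcomb C n)%:R * tailS R C n.
Proof.
move=> C_ge7; elim: n => [|n IHn] //=.
have gap := tailS_cube_gap_ge1 n C_ge7.
have L_tail : (lcomb C n)%:R * tailS R C n = 1 + (lcomb C n)%:R * tailS R C n.+1.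
  by rewrite {1}tailS_recl mulrDr mulrC divfK ?lt0r_neq0 ?natr_lcomb_gt0.
rewrite !mulrBl mul1r in gap; lra.
Qed.

Lemma vbase_add_inv_le n : vbase R C n + 1 / (n + C)%:R <= vbase R C 0 + 1.
Proof.
elim: n => [|n IHn].
  by rewrite lerD2l ler_pdivrMr ?mul1r ?ler1n ?ltr0n //; lia.
have x_ge1 : (1 : R) <= (n + C)%:R by rewrite ler1n; lia.
have inv_split : 1 / ((n + C)%:R * ((n + C)%:R + 1)) =
    1 / (n + C)%:R - 1 / ((n + C)%:R + 1) :> R.
  by field; apply/andP; split; apply/eqP; lra.
have := tailS_le n.+1; rewrite natr_addSn addrK inv_split => tail_le.
rewrite [vbase _ _ n.+1]/=; lra.
Qed.

Lemma vbase_le n : vbase R C n <= vbase R C 0 + 1.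
Proof.
have inv_ge0 : 0 <= 1 / ((n + C)%:R : R) by rewrite divr_ge0.
by have := vbase_add_inv_le n; lra.
Qed.

Lemma vcombE n l :
  vcomb R C (n, l) = vbase R C n - l%:R * (vbase R C n / (lcomb C n)%:R).
Proof. by rewrite /vcomb /=; field; rewrite lt0r_neq0 ?natr_lcomb_gt0. Qed.

Lemma vcomb_root n : vcomb R C (n, 0%N) = vbase R C n.
Proof. by rewrite vcombE mul0r subr0. Qed.

Lemma vcomb_bounds n l : (l <= lcomb C n)%N -> 0 <= vcomb R C (n, l) <= vbase R C n.
Proof.
move=> l_le; have L_gt0 := natr_lcomb_gt0 n.
have ratio_ge0 : 0 <= ((lcomb C n)%:R - l%:R) / (lcomb C n)%:R :> R.
  by rewrite divr_ge0 ?subr_ge0 ?ler_nat // ltW.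
have ratio_le1 : ((lcomb C n)%:R - l%:R) / (lcomb C n)%:R <= 1 :> R.
  by rewrite ler_pdivrMr // mul1r gerBl.
by rewrite /vcomb mulr_ge0 ?vbase_ge0 // ler_piMl ?vbase_ge0.
Qed.

Lemma inf_laplacian_tooth n l : (l.+1 < lcomb C n)%N ->
  inf_laplacian R C (vcomb R C) (n, l.+1) = - fcomb R C (n, l.+1).
Proof.
move=> l_lt; have slope_ge0 : 0 <= vbase R C n / (lcomb C n)%:R.
  by rewrite divr_ge0 ?vbase_ge0 // ltW ?natr_lcomb_gt0.
have adj_lo : comb_adj C (n, l.+1) (n, l.+2) by rewrite /comb_adj /inV /=; lia.
have adj_hi : comb_adj C (n, l.+1) (n, l) by rewrite /comb_adj /inV /=; lia.
rewrite (inf_laplacian_minmax adj_lo adj_hi).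
  by rewrite !vcombE -!natr1 /fcomb /=; ring.
move=> y /comb_adj_tooth [] ->; rewrite !vcombE -!natr1; apply/andP; split; nra.
Qed.

Lemma inf_laplacian_root0 :
  inf_laplacian R C (vcomb R C) (0, 0)%N = - fcomb R C (0, 0)%N.
Proof.
have adj_lo : comb_adj C (0, 0)%N (0, 1)%N.
  by have := lcomb_gt0 0; rewrite /comb_adj /inV /=; lia.
have adj_hi : comb_adj C (0, 0)%N (1, 0)%N by rewrite /comb_adj /inV /=; lia.
have slope : vbase R C 0 / (lcomb C 0)%:R = tailS R C 0.
  by rewrite /= mulrC mulKf ?lt0r_neq0 ?natr_lcomb_gt0.
have tail := tailS_recl 0; have tail0_ge0 := tailS_ge0 0; have tail1_ge0 := tailS_ge0 1.
rewrite (inf_laplacian_minmax adj_lo adj_hi).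
  by rewrite !vcomb_root vcombE slope mul1r /fcomb /=; lra.
by move=> y /comb_adj_root0 [] ->; rewrite ?vcomb_root vcombE slope /=; apply/andP; split; lra.
Qed.

Lemma inf_laplacian_rootS n : (7 <= C)%N ->
  inf_laplacian R C (vcomb R C) (n.+1, 0)%N = - fcomb R C (n.+1, 0)%N.
Proof.
move=> C_ge7.
have adj_lo : comb_adj C (n.+1, 0)%N (n, 0)%N by rewrite /comb_adj /inV /=; lia.
have adj_hi : comb_adj C (n.+1, 0)%N (n.+2, 0)%N by rewrite /comb_adj /inV /=; lia.
have slope_le : vbase R C n.+1 / (lcomb C n.+1)%:R <= tailS R C n.+1.
  by rewrite ler_pdivrMr ?natr_lcomb_gt0 // mulrC vbase_le_lcomb_tailS.
have slope_ge0 : 0 <= vbase R C n.+1 / (lcomb C n.+1)%:R.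
  by rewrite divr_ge0 ?vbase_ge0 // ltW ?natr_lcomb_gt0.
have tail := tailS_recl n.+1; have tail_ge0 := tailS_ge0 n.+2.
have step : vbase R C n.+2 = vbase R C n.+1 + tailS R C n.+2 by [].
have prev : vbase R C n = vbase R C n.+1 - tailS R C n.+1 by rewrite /= addrK.
rewrite (inf_laplacian_minmax adj_lo adj_hi).
  by rewrite !vcomb_root step prev /fcomb /=; lra.
move=> y /comb_adj_rootS [|[]] ->; rewrite ?vcomb_root ?vcombE step prev.
all: by apply/andP; split; lra.
Qed.

End CombSolution.

Theorem proposition4p5 :
  exists C0 : nat, forall C : nat, (0 < C)%N -> (C0 <= C)%N ->
  forall R : realType,
    (exists M : R, forall x, inV C x -> `|vcomb R C x| <= M) /\
    (forall x, inV C x -> (x.2 < lcomb C x.1)%N ->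
        inf_laplacian R C (vcomb R C) x = - fcomb R C x) /\
    (forall x, inV C x -> x.2 = lcomb C x.1 -> vcomb R C x = 0).
Proof.
exists 7%N => C _ C_ge7 R; have C_ge2 : (2 <= C)%N by apply: leq_trans C_ge7.
split; [|split].
- exists (vbase R C 0 + 1) => -[n l] l_le.
  have /andP[v_ge0 v_le] := vcomb_bounds R C C_ge2 n l l_le.
  by rewrite ger0_norm //; apply: le_trans v_le (vbase_le R C C_ge2 n).
- move=> -[[|n] [|l]] _ /= l_lt.
  + exact: inf_laplacian_root0.
  + exact: inf_laplacian_tooth.
  + exact: inf_laplacian_rootS.
  + exact: inf_laplacian_tooth.
- by move=> -[n l] _ /= ->; rewrite /vcomb subrr !mul0r.
Qed.
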